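(* Let $n,\kappa\ge1$. For every $t>0$, the covering number of $\mathcal{S}_{1,2}\subset\mathbb{R}^{n^\kappa}$ satisfies $$\mathcal{N}(\mathcal{S}_{1,2},t)\le\Big(\Big(\frac{6\kappa}{t}\Big)^{\kappa n}+1\Big)^2.$$
   Context: $\mathcal{S}_1=\{\mathbf{u}^1\otimes\cdots\otimes\mathbf{u}^\kappa:\mathbf{u}^i\in\mathbb{S}^{n-1}\}\subset\mathbb{R}^{n^\kappa}$ ($\otimes$ the Kronecker product), $\mathcal{S}_2=\{(\mathbf{x}+\mathbf{y})/\|\mathbf{x}+\mathbf{y}\|_2:\mathbf{x},\mathbf{y}\in\mathcal{S}_1,\langle\mathbf{x},\mathbf{y}\rangle=0\}$, $\mathcal{S}_{1,2}=\mathcal{S}_1\cup\mathcal{S}_2$. The covering number $\mathcal{N}(\mathcal{S},t)$ is the minimal cardinality of a subset of $\mathcal{S}$ such that every element of $\mathcal{S}$ is within Euclidean distance $t$ of an element of the subset. *)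

From HB Require Import structures.
From mathcomp Require Import all_boot all_order all_algebra.
From mathcomp Require Import mxtens.
From mathcomp Require Import all_classical all_reals ereal.
Set Implicit Arguments. Unset Strict Implicit. Unset Printing Implicit Defensive.
Import Order.TTheory GRing.Theory Num.Theory.
Local Open Scope ring_scope.
Local Open Scope classical_set_scope.

Section Defs.
Variable R : realType.

Definition inner (m : nat) (x y : 'rV[R]_m) : R := \sum_(j < m) x 0 j * y 0 j.
Definition l2norm (m : nat) (x : 'rV[R]_m) : R := Num.sqrt (inner x x).

Fixpoint kronprod (n k : nat) (u : nat -> 'rV[R]_n) : 'rV[R]_(n ^ k) :=
  match k return 'rV[R]_(n ^ k) with
  | 0 => const_mx 1
  | k'.+1 => castmx (muln1 1%N, esym (expnS n k'))
               (tensmx (u 0%N) (kronprod k' (fun i => u i.+1)))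
  end.

Definition S1 (n kappa : nat) : set 'rV[R]_(n ^ kappa) :=
  [set x : 'rV[R]_(n ^ kappa) | exists u : nat -> 'rV[R]_n,
     (forall i, (i < kappa)%N -> l2norm (u i) = 1) /\ x = kronprod kappa u].

Definition S2 (n kappa : nat) : set 'rV[R]_(n ^ kappa) :=
  [set z | exists x y, @S1 n kappa x /\ @S1 n kappa y /\ inner x y = 0 /\
     z = (l2norm (x + y))^-1 *: (x + y)].

Definition S12 (n kappa : nat) : set 'rV[R]_(n ^ kappa) := @S1 n kappa `|` @S2 n kappa.

Definition is_net (m : nat) (S : set 'rV[R]_m) (t : R) (C : seq 'rV[R]_m) :=
  uniq C /\ (forall c, c \in C -> S c) /\
  (forall x, S x -> exists2 c, c \in C & l2norm (x - c) <= t).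

(* Covering number: minimal cardinality of such a net (+oo if none exists). *)
Definition covering_number (m : nat) (S : set 'rV[R]_m) (t : R) : \bar R :=
  ereal_inf [set ((size C)%:R)%:E | C in is_net S t].

End Defs.

(* Volume comparison: the balls of radius e/2 around a maximal e-separated set
   of unit vectors of R^m are disjoint and lie in the ball of radius 1 + e/2, so
   this set, which is an e-net of the sphere, has at most (1 + 2/e)^m points.
   For unit vectors |u_1 (x) ... (x) u_k - v_1 (x) ... (x) v_k|^2 =
   2 (1 - prod_i <u_i, v_i>) <= sum_i |u_i - v_i|^2, so with e = t / (2 kappa)
   the Kronecker products of kappa net points form a set A with
   |A| <= (1 + 4 kappa / t)^(kappa n) approximating S_1 within squared distance
   t^2 / (4 kappa), and the vectors (a + b) / sqrt 2 with a, b in A approximate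
   S_2 within twice that, which is at most (t/2)^2 when kappa >= 2.  A t/2-net of
   S_{1,2} made of arbitrary points yields a t-net inside S_{1,2} of no larger
   size.  For kappa = 1 the set lies on the unit sphere, whose net suffices, and
   for t >= 2 a single point covers it. *)

From mathcomp Require Import all_boot all_order all_algebra.
From mathcomp Require Import all_classical all_reals ereal.
From mathcomp Require Import mxtens ring lra.
From mathcomp Require Import all_analysis measurable_realfun.
Set Implicit Arguments.
Unset Strict Implicit.
Unset Printing Implicit Defensive.
Import Order.TTheory GRing.Theory Num.Theory.
Local Open Scope ring_scope.
Local Open Scope classical_set_scope.

Section SquaredDistance.
Variable R : realType.

Definition sqdist m (x y : 'rV[R]_m) : R := inner (x - y) (x - y).

Lemma sqdistE m (x y : 'rV[R]_m) : sqdist x y = \sum_j (x 0 j - y 0 j) ^+ 2.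
Proof. by apply: eq_bigr => j _; rewrite !mxE expr2. Qed.

Lemma sqdist_ge0 m (x y : 'rV[R]_m) : 0 <= sqdist x y.
Proof. by rewrite sqdistE; apply: sumr_ge0 => j _; exact: sqr_ge0. Qed.

Lemma sqdistC m (x y : 'rV[R]_m) : sqdist x y = sqdist y x.
Proof. by rewrite !sqdistE; apply: eq_bigr => j _; rewrite -sqrrN opprB. Qed.

Lemma sqdistx0 m (x : 'rV[R]_m) : sqdist x 0 = inner x x.
Proof. by rewrite /sqdist subr0. Qed.

Lemma sqdist_inner m (x y : 'rV[R]_m) :
  sqdist x y = inner x x - 2 * inner x y + inner y y.
Proof.
rewrite sqdistE /inner mulr_sumr -sumrB -big_split /=.
by apply: eq_bigr => j _; rewrite sqrrB; ring.
Qed.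

Lemma sqrD_le_weighted (a b t : R) : 0 < t ->
  (a + b) ^+ 2 <= (1 + t) * a ^+ 2 + (1 + t^-1) * b ^+ 2.
Proof.
move=> t0; have : 0 <= (t * a - b) ^+ 2 / t by rewrite divr_ge0 ?sqr_ge0 ?ltW.
have -> : (t * a - b) ^+ 2 / t = t * a ^+ 2 - 2 * a * b + b ^+ 2 / t.
  by field; exact: lt0r_neq0.
nra.
Qed.

Lemma sqdist_le_weighted m (x y z : 'rV[R]_m) (t : R) : 0 < t ->
  sqdist x z <= (1 + t) * sqdist y z + (1 + t^-1) * sqdist x y.
Proof.
move=> t0; rewrite !sqdistE !mulr_sumr -big_split /=; apply: ler_sum => j _.
have -> : x 0 j - z 0 j = (y 0 j - z 0 j) + (x 0 j - y 0 j) by ring.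
exact: sqrD_le_weighted.
Qed.

Lemma sqdist_le2 m (x y z : 'rV[R]_m) :
  sqdist x z <= 2 * sqdist x y + 2 * sqdist y z.
Proof.
by have := sqdist_le_weighted x y z ltr01; rewrite invr1; lra.
Qed.

Lemma l2norm_le_sqdist m (x y : 'rV[R]_m) (t : R) :
  0 <= t -> sqdist x y <= t ^+ 2 -> l2norm (x - y) <= t.
Proof.
move=> t0 h; rewrite /l2norm -[t in _ <= t](ger0_norm t0) -sqrtr_sqr.
by rewrite ler_sqrt ?sqr_ge0.
Qed.

Definition row_init m (c : 'rV[R]_m.+1) : 'rV[R]_m := \row_k c 0 (lift ord_max k).

Definition row_snoc m (x : 'rV[R]_m) (y : R) : 'rV[R]_m.+1 :=
  \row_j (if unlift ord_max j is Some k then x 0 k else y).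

Lemma sqdist_snoc m (x : 'rV[R]_m) y (c : 'rV[R]_m.+1) :
  sqdist (row_snoc x y) c = sqdist x (row_init c) + (y - c 0 ord_max) ^+ 2.
Proof.
rewrite !sqdistE big_ord_recr /=; congr (_ + _); last by rewrite !mxE unlift_none.
apply: eq_bigr => i _.
have -> : widen_ord (leqnSn m) i = lift ord_max i.
  by apply: val_inj; rewrite /= /bump leqNgt ltn_ord.
by rewrite !mxE liftK.
Qed.

End SquaredDistance.

Section BallVolume.
Variable R : realType.
Local Notation mu := (@lebesgue_measure R).
Local Open Scope ereal_scope.

Lemma lebesgue_integral_shift (f : R -> \bar R) (a : R) :
  measurable_fun setT f -> (forall x, 0 <= f x) ->
  \int[mu]_x f (x + a)%R = \int[mu]_x f x.
Proof.
move=> mf f0.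
have mg : measurable_fun setT (fun x : R => x + a)%R.
  by apply: measurable_funD => //; exact: measurable_cst.
have mu_shift A : measurable A ->
    pushforward mu ((fun x : R => x + a)%R : R -> measurableTypeR R) A = mu A.
  move=> mA; apply/esym/lebesgue_measure_unique => // X.
  move=> /ocitvP[->|[[x1 x2]/= x12 ->]]; first by rewrite !measure0.
  rewrite /pushforward.
  have -> : (fun x : R => x + a)%R @^-1` `]x1, x2]%classic =
            `](x1 - a)%R, (x2 - a)%R]%classic.
    by apply/seteqP; split => x /=; rewrite !in_itv/= lerBrDr ltrBlDr.
  rewrite !lebesgue_measure_itv/= !lte_fin ltrD2r x12; congr (_ %:E); lra.
rewrite -[RHS](@eq_measure_integral _ _ _ _ _ (pushforward mu
  ((fun x : R => x + a)%R : R -> measurableTypeR R))); last first.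
  by move=> A mA _; exact: mu_shift.
by rewrite ge0_integral_pushforward.
Qed.

Lemma lebesgue_integral_scale (f : R -> \bar R) (l : R) : (0 < l)%R ->
  measurable_fun setT f -> (forall x, 0 <= f x) ->
  \int[mu]_x f x = l%:E * \int[mu]_x f (l * x)%R.
Proof.
move=> l0 mf f0.
have mg : measurable_fun setT ((fun x : R => l * x)%R : R -> measurableTypeR R).
  by apply: measurable_funM => //; exact: measurable_cst.
pose k : {nonneg R} := NngNum (ltW l0).
pose pf := measure_function_pushforward__canonical__measure_function_Measure
   (f := ((fun x : R => l * x)%R : R -> measurableTypeR R)) mu mg.
have mu_scale X : ocitv X -> mu X = mscale k pf X.
  move=> /ocitvP[->|[[x1 x2]/= x12 ->]]; first by rewrite !measure0.
  rewrite /mscale /= /pushforward.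
  have -> : (fun x : R => l * x)%R @^-1` `]x1, x2]%classic =
            `](x1 / l)%R, (x2 / l)%R]%classic.
    apply/seteqP; split => x /=;
      by rewrite !in_itv/= ltr_pdivrMr // ler_pdivlMr // [(x * l)%R]mulrC.
  rewrite !lebesgue_measure_itv/= !lte_fin ltr_pM2r ?invr_gt0 // x12 -EFinM.
  by congr (_ %:E); field; exact: lt0r_neq0.
transitivity (\int[mscale k pf]_x f x).
  by apply: eq_measure_integral => A mA _; exact: lebesgue_measure_unique mu_scale _ mA.
by rewrite ge0_integral_mscale //= ge0_integral_pushforward.
Qed.

Lemma nondecreasing_emeasurable (f : R -> \bar R) :
  {homo f : s t / (s <= t)%R >-> s <= t} -> measurable_fun setT f.
Proof.
move=> f_nd.
apply: (measurability _ (ErealGenCInfty.measurableE R)) => //.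
move=> _ [_ [r ->] <-].
apply: measurableI => //; apply: is_interval_measurable => s t/=.
rewrite !in_itv/= !andbT => fs ft u /andP[su ut].
by rewrite in_itv/= andbT (le_trans fs)// f_nd.
Qed.

(* [ballvol m s] is the Lebesgue measure of the open ball of squared radius [s]
   in [R^m], written as an iterated integral over the last coordinate so that
   no product measure is needed. *)
Fixpoint ballvol (m : nat) (s : R) : \bar R :=
  if m is m'.+1 then \int[mu]_y ballvol m' (s - y ^+ 2)%R
  else if (0 < s)%R then 1 else 0.

Lemma ballvol_ge0 m s : 0 <= ballvol m s.
Proof.
elim: m s => [|m IH] s /=; first by case: ifP.
by apply: integral_ge0 => y _; exact: IH.
Qed.

Lemma ballvol_eq0 m s : (s <= 0)%R -> ballvol m s = 0.
Proof.
elim: m s => [|m IH] s s0 /=; first by rewrite ltNge s0.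
rewrite (eq_integral (fun _ => 0)) ?integral0 // => y _.
by apply: IH; rewrite subr_le0 (le_trans s0) ?sqr_ge0.
Qed.

Lemma le_ballvol m : {homo ballvol m : s t / (s <= t)%R >-> s <= t}.
Proof.
elim: m => [|m IH] s t st /=.
  by case: ifP => s0; case: ifP => t0 //; rewrite (lt_le_trans s0 st) in t0.
have mf u : measurable_fun setT (fun y : R => ballvol m (u - y ^+ 2)%R).
  apply: (measurableT_comp (f := ballvol m)); first exact: nondecreasing_emeasurable.
  by apply: measurable_funB => //; exact: measurable_funX.
apply: ge0_le_integral => //; [by move=> y _; exact: ballvol_ge0|exact: mf|exact: mf|].
by move=> y _; apply: IH; rewrite lerD2r.
Qed.

Lemma measurable_ballvol_shift m (s a : R) :
  measurable_fun setT (fun y : R => ballvol m (s - (y - a) ^+ 2)%R).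
Proof.
apply: (measurableT_comp (f := ballvol m)).
  exact: nondecreasing_emeasurable (@le_ballvol m).
apply: measurable_funB => //; apply: measurable_funX.
by apply: measurable_funB => //; exact: measurable_cst.
Qed.

Lemma measurable_ballvol m (s : R) :
  measurable_fun setT (fun y : R => ballvol m (s - y ^+ 2)%R).
Proof.
by have := measurable_ballvol_shift m s 0; apply: eq_measurable_fun => y _; rewrite subr0.
Qed.

Lemma ballvolS m s a : ballvol m.+1 s = \int[mu]_y ballvol m (s - (y - a) ^+ 2)%R.
Proof.
rewrite /= -(lebesgue_integral_shift (- a) (measurable_ballvol m s)) //.
by move=> y; exact: ballvol_ge0.
Qed.

Lemma ballvolZ m (l s : R) : (0 < l)%R ->
  ballvol m (l ^+ 2 * s)%R = (l ^+ m)%:E * ballvol m s.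
Proof.
move=> l0; elim: m s => [|m IH] s /=.
  by rewrite expr0 mul1e pmulr_rgt0 // exprn_gt0.
rewrite (lebesgue_integral_scale l0 (measurable_ballvol _ _)); last first.
  by move=> y; exact: ballvol_ge0.
under eq_integral do rewrite exprMn -mulrBr IH.
rewrite ge0_integralZl //; first by rewrite muleA -EFinM exprS.
- exact: measurable_ballvol.
- by move=> y _; exact: ballvol_ge0.
- by rewrite lee_fin exprn_ge0 // ltW.
Qed.

Lemma integral_cst_itv (c a b : R) : (0 <= c)%R -> (a < b)%R ->
  \int[mu]_y (c%:E * (\1_(`]a, b[%classic : set R) y)%:E) = (c * (b - a))%:E.
Proof.
move=> c0 ab; rewrite ge0_integralZl //; last first.
  by apply/measurable_EFinP; exact: measurable_indic.
rewrite integral_indic // setIT EFinM; congr (_ * _).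
by have := lebesgue_measure_itv `]a, b[%R; rewrite /= lte_fin ab.
Qed.

Lemma ballvol1_lty m : ballvol m 1 < +oo.
Proof.
elim: m => [|m IH] /=; first by rewrite ltr01 ltry.
have c0 : (0 <= fine (ballvol m 1))%R by apply: fine_ge0; exact: ballvol_ge0.
have cE : ballvol m 1 = (fine (ballvol m 1))%:E.
  by rewrite fineK // ge0_fin_numE ?IH // ballvol_ge0.
apply: (@le_lt_trans _ _ (\int[mu]_y ((fine (ballvol m 1))%:E *
                                      (\1_(`](-1)%R, 1%R[%classic : set R) y)%:E))).
  apply: ge0_le_integral => //.
  - by move=> y _; exact: ballvol_ge0.
  - exact: measurable_ballvol.
  - by apply/measurable_funeM/measurable_EFinP; exact: measurable_indic.
  move=> y _; rewrite indicE -cE; have [|/negP y1] := boolP (y \in _).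
    by move=> _; rewrite mule1 le_ballvol // lerBlDr lerDl sqr_ge0.
  rewrite mule0 ballvol_eq0 // subr_le0; apply: contra_notP y1 => /negP.
  by rewrite -ltNge inE /= in_itv /= => y21; apply/andP; split; nra.
by rewrite integral_cst_itv ?ltry //; lra.
Qed.

Lemma ballvol1_gt0 m : 0 < ballvol m 1.
Proof.
elim: m => [|m IH] /=; first by rewrite ltr01 lte01.
have c0 : (0 < fine (ballvol m 1))%R by rewrite fine_gt0 // IH ballvol1_lty.
have h0 : (0 <= (1 / 2) ^+ m * fine (ballvol m 1))%R.
  by rewrite mulr_ge0 ?exprn_ge0 // ltW.
have quarterE : ballvol m (1 / 4)%R = ((1 / 2) ^+ m * fine (ballvol m 1))%:E.
  rewrite (_ : (1 / 4)%R = ((1 / 2) ^+ 2 * 1)%R); last by field.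
  rewrite ballvolZ ?divr_gt0 // EFinM fineK //.
  by rewrite ge0_fin_numE ?ballvol1_lty ?ballvol_ge0.
apply: (@lt_le_trans _ _ (\int[mu]_y (((1 / 2) ^+ m * fine (ballvol m 1))%:E *
                             (\1_(`](- (1 / 2))%R, (1 / 2)%R[%classic : set R) y)%:E))).
  rewrite integral_cst_itv //; last by lra.
  rewrite lte_fin; apply: mulr_gt0; last by lra.
  by rewrite mulr_gt0 // exprn_gt0 //; lra.
apply: ge0_le_integral => //.
- by move=> y _; rewrite mule_ge0 // lee_fin indicE.
- by apply/measurable_funeM/measurable_EFinP; exact: measurable_indic.
- exact: measurable_ballvol.
move=> y _; rewrite indicE -quarterE; have [|_] := boolP (y \in _).
  by rewrite inE /= in_itv /= => /andP[y1 y2]; rewrite mule1 le_ballvol //; nra.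
by rewrite mule0 ballvol_ge0.
Qed.

Lemma ballvol_sqr m : exists2 c : R, (0 < c)%R &
  forall r : R, (0 < r)%R -> ballvol m (r ^+ 2) = (c * r ^+ m)%:E.
Proof.
exists (fine (ballvol m 1)); first by rewrite fine_gt0 // ballvol1_gt0 ballvol1_lty.
move=> r r0; rewrite -[(r ^+ 2)%R]mulr1 ballvolZ // mulrC EFinM fineK //.
by rewrite ge0_fin_numE ?ballvol1_lty ?ballvol_ge0.
Qed.

(* The hypothesis says that the balls [B(b.1, sqrt b.2)] are pairwise disjoint
   and contained in [B(c, sqrt s)]; the proof slices along the last coordinate. *)
Lemma ballvol_sum_le m (bs : seq ('rV[R]_m * R)) (c : 'rV[R]_m) (s : R) :
  (forall x, count (fun b => sqdist x b.1 < b.2)%R bs <= (sqdist x c < s)%R)%N ->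
  \sum_(b <- bs) ballvol m b.2 <= ballvol m s.
Proof.
elim: m bs c s => [|m IH] bs c s H.
  have sqdist0 (x y : 'rV[R]_0) : sqdist x y = 0%R by rewrite sqdistE big_ord0.
  have sum0 : \sum_(b <- bs) ballvol 0 b.2 = (count (fun b => 0 < b.2)%R bs)%:R%:E.
    elim: bs {H} => [|b bs IHbs]; first by rewrite big_nil.
    by rewrite big_cons IHbs /=; case: ifP; rewrite ?add0e // -EFinD nat1r.
  have := H 0%R; under eq_count do rewrite sqdist0.
  by rewrite sum0 sqdist0 /=; case: ifP => _; rewrite -(ler_nat R) lee_fin.
have slice y : \sum_(b <- bs) ballvol m (b.2 - (y - b.1 0 ord_max) ^+ 2)%R
               <= ballvol m (s - (y - c 0 ord_max) ^+ 2)%R.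
  have := IH [seq (row_init b.1, b.2 - (y - b.1 0 ord_max) ^+ 2)%R | b <- bs]
             (row_init c) (s - (y - c 0 ord_max) ^+ 2)%R.
  rewrite big_map; apply => x; rewrite count_map.
  have := H (row_snoc x y); rewrite sqdist_snoc ltrBrDr.
  by under [X in (X <= _)%N -> _]eq_count do rewrite sqdist_snoc -ltrBrDr.
rewrite (ballvolS _ _ (c 0%R ord_max)).
under eq_bigr => b _ do rewrite (ballvolS _ _ (b.1 0%R ord_max)).
rewrite -ge0_integral_sum //; last 2 first.
- by move=> b; exact: measurable_ballvol_shift.
- by move=> b y _; exact: ballvol_ge0.
apply: ge0_le_integral => //.
- by move=> y _; apply: sume_ge0 => b _; exact: ballvol_ge0.
- by apply: emeasurable_sum => b; exact: measurable_ballvol_shift.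
- exact: measurable_ballvol_shift.
Qed.

Lemma count_separated_balls_le m (e : R) (L : seq 'rV[R]_m) (x : 'rV[R]_m) :
  (0 < e)%R -> (forall p, p \in L -> inner p p = 1%R) ->
  pairwise (fun p q => e ^+ 2 <= sqdist p q)%R L ->
  (count (fun p => sqdist x p < e ^+ 2 / 4)%R L <= (sqdist x 0 < (1 + e / 2) ^+ 2)%R)%N.
Proof.
move=> e0; elim: L => [|p L IH] //= unitL /andP[far_p sepL].
have {}IH := IH (fun q qL => unitL q (@mem_behead _ (p :: L) _ qL)) sepL.
case: ltrP => [xp|_] /=; last by rewrite add0n.
have -> : count (fun q => sqdist x q < e ^+ 2 / 4)%R L = 0%N.
  apply/eqP; rewrite -leqn0 leqNgt -has_count; apply/hasP => -[q qL xq].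
  move/allP: far_p => /(_ q qL); apply/negP; rewrite -ltNge.
  by apply: le_lt_trans (sqdist_le2 p x q) _; rewrite sqdistC in xp; lra.
have e2 : (0 < e / 2)%R by rewrite divr_gt0.
rewrite addn0 lt0b; apply: le_lt_trans (sqdist_le_weighted x p 0 e2) _.
rewrite sqdistx0 unitL ?mem_head // invf_div.
have : ((1 + 2 / e) * sqdist x p < (1 + 2 / e) * (e ^+ 2 / 4))%R.
  by rewrite ltr_pM2l // addr_gt0 // divr_gt0.
have -> : ((1 + 2 / e) * (e ^+ 2 / 4) = e / 2 + e ^+ 2 / 4)%R.
  by field; exact: lt0r_neq0.
lra.
Qed.

Lemma size_separated_le m (e : R) (L : seq 'rV[R]_m) :
  (0 < e)%R -> (forall p, p \in L -> inner p p = 1%R) ->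
  pairwise (fun p q => e ^+ 2 <= sqdist p q)%R L ->
  ((size L)%:R <= (1 + 2 / e) ^+ m)%R.
Proof.
move=> e0 unitL sepL; have e2 : (0 < e / 2)%R by rewrite divr_gt0.
have packed : \sum_(p <- L) ballvol m ((e / 2) ^+ 2)%R <= ballvol m ((1 + e / 2) ^+ 2)%R.
  have := @ballvol_sum_le m [seq (p, (e / 2) ^+ 2)%R | p <- L] 0 ((1 + e / 2) ^+ 2)%R.
  rewrite big_map; apply => x; rewrite count_map.
  have -> : ((e / 2) ^+ 2 = e ^+ 2 / 4)%R by field.
  exact: count_separated_balls_le.
have [c c0 volE] := ballvol_sqr m.
move: packed; rewrite !volE ?addr_gt0 // sumEFin big_const_seq count_predT.
rewrite iter_addr_0 lee_fin -mulrnAr ler_pM2l // -mulr_natl => packed.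
rewrite -(ler_pM2r (exprn_gt0 m e2)) -exprMn.
by have -> : ((1 + 2 / e) * (e / 2) = 1 + e / 2)%R by field; exact: lt0r_neq0.
Qed.

Lemma unit_sphere_net m (e : R) : (0 < e)%R -> exists P : seq 'rV[R]_m,
  [/\ forall p, p \in P -> inner p p = 1%R, ((size P)%:R <= (1 + 2 / e) ^+ m)%R &
      forall x, inner x x = 1%R -> exists2 p, p \in P & (sqdist x p < e ^+ 2)%R].
Proof.
move=> e0; apply: contrapT => no_net.
have grow k : exists L : seq 'rV[R]_m, [/\ forall p, p \in L -> inner p p = 1%R,
    pairwise (fun p q => e ^+ 2 <= sqdist p q)%R L & size L = k].
  elim: k => [|k [L [unitL sepL <-]]]; first by exists [::].
  have : ~ forall x, inner x x = 1%R -> exists2 p, p \in L & (sqdist x p < e ^+ 2)%R.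
    by move=> covL; apply: no_net; exists L; split => //; exact: size_separated_le.
  move=> /existsNP[x /not_implyP[x1 /forall2NP far_x]].
  exists (x :: L); split => //=.
  - by move=> p; rewrite inE => /orP[/eqP ->|]; [exact: x1 | exact: unitL].
  - rewrite sepL andbT; apply/allP => q qL; rewrite leNgt; apply/negP => xq.
    by case: (far_x q) => -[] //; rewrite xq.
have [L [unitL sepL sizeL]] := grow (Num.Def.archi_bound ((1 + 2 / e) ^+ m)%R).
have := size_separated_le e0 unitL sepL; rewrite sizeL leNgt => /negP; apply.
by apply: archi_boundP; rewrite exprn_ge0 // addr_ge0 // divr_ge0 // ltW.
Qed.

End BallVolume.

Section InnerProduct.
Variable R : realType.

Lemma inner_ge0 m (x : 'rV[R]_m) : 0 <= inner x x.
Proof. by apply: sumr_ge0 => j _; rewrite -expr2 sqr_ge0. Qed.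

Lemma l2norm_eq1 m (x : 'rV[R]_m) : l2norm x = 1 -> inner x x = 1.
Proof.
by move=> x1; rewrite -[inner x x]sqr_sqrtr ?inner_ge0 // -/(l2norm x) x1 expr1n.
Qed.

Lemma innerDD m (x y : 'rV[R]_m) :
  inner (x + y) (x + y) = inner x x + 2 * inner x y + inner y y.
Proof.
rewrite /inner mulr_sumr -!big_split /=.
by apply: eq_bigr => j _; rewrite !mxE; ring.
Qed.

Lemma innerZZ m (c : R) (x : 'rV[R]_m) : inner (c *: x) (c *: x) = c ^+ 2 * inner x x.
Proof. by rewrite /inner mulr_sumr; apply: eq_bigr => j _; rewrite !mxE; ring. Qed.

Lemma innerDD_le m (x y : 'rV[R]_m) :
  inner (x + y) (x + y) <= 2 * inner x x + 2 * inner y y.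
Proof. by have := sqdist_ge0 x y; rewrite innerDD sqdist_inner; lra. Qed.

Lemma norm_inner_le1 m (x y : 'rV[R]_m) :
  inner x x = 1 -> inner y y = 1 -> `|inner x y| <= 1.
Proof.
move=> x1 y1; have := sqdist_ge0 x y; have := inner_ge0 (x + y).
by rewrite innerDD sqdist_inner x1 y1 ler_norml => *; apply/andP; split; lra.
Qed.

Lemma inner_castmx p p' (e : ((1 * 1 = 1)%N * (p = p'))%type) (x y : 'M[R]_(1 * 1, p)) :
  inner (castmx e x) (castmx e y) = inner (x : 'rV_p) y.
Proof.
case: e => e1 e2; case: p' / e2.
by rewrite (eq_irrelevance e1 (erefl _)) !castmx_id.
Qed.

Lemma inner_tensmx p q (a c : 'rV[R]_p) (b d : 'rV[R]_q) :
  inner ((tensmx a b : 'M[R]_(1 * 1, p * q)) : 'rV[R]_(p * q)) (tensmx c d) =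
  inner a c * inner b d.
Proof.
rewrite /inner mulr_sum; apply: eq_bigr => j _; rewrite !mxE.
by rewrite !(ord1 (mxtens_unindex _).1) !(ord1 (mxtens_unindex _).2); ring.
Qed.

Lemma inner_kronprod n k (u v : nat -> 'rV[R]_n) :
  inner (kronprod k u) (kronprod k v) = \prod_(i < k) inner (u i) (v i).
Proof.
elim: k u v => [|k IH] u v /=; first by rewrite big_ord0 /inner big_ord1 !mxE mulr1.
by rewrite inner_castmx inner_tensmx IH big_ord_recl.
Qed.

Lemma onem_prod_le (I : Type) (r : seq I) (P : pred I) (a : I -> R) :
  (forall i, P i -> `|a i| <= 1) ->
  1 - \prod_(i <- r | P i) a i <= \sum_(i <- r | P i) (1 - a i).
Proof.
move=> a1; elim: r => [|i r IH]; first by rewrite !big_nil subrr.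
rewrite !big_cons; case: ifP => // Pi.
have prod_le1 : \prod_(j <- r | P j) a j <= 1.
  apply: le_trans (ler_norm _) _; rewrite normr_prod.
  by apply: prodr_ile1 => j Pj; rewrite normr_ge0 a1.
have /ler_normlP[_ ai1] := a1 i Pi.
have : 0 <= (1 - a i) * (1 - \prod_(j <- r | P j) a j) by rewrite mulr_ge0 // subr_ge0.
lra.
Qed.

Lemma sqdist_kronprod_le n k (u v : nat -> 'rV[R]_n) :
  (forall i, (i < k)%N -> inner (u i) (u i) = 1) ->
  (forall i, (i < k)%N -> inner (v i) (v i) = 1) ->
  sqdist (kronprod k u) (kronprod k v) <= \sum_(i < k) sqdist (u i) (v i).
Proof.
move=> u1 v1.
have uu : \prod_(i < k) inner (u i) (u i) = 1 by rewrite big1 // => i _; exact: u1.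
have vv : \prod_(i < k) inner (v i) (v i) = 1 by rewrite big1 // => i _; exact: v1.
rewrite sqdist_inner !inner_kronprod uu vv.
have -> : \sum_(i < k) sqdist (u i) (v i) = 2 * \sum_(i < k) (1 - inner (u i) (v i)).
  by rewrite mulr_sumr; apply: eq_bigr => i _; rewrite sqdist_inner u1 ?v1 //; ring.
have := @onem_prod_le _ (index_enum 'I_k) xpredT _
  (fun i _ => norm_inner_le1 (u1 i (ltn_ord i)) (v1 i (ltn_ord i))).
lra.
Qed.

End InnerProduct.

Fixpoint tuples (T : Type) (P : seq T) (k : nat) : seq (seq T) :=
  if k is k'.+1 then [seq p :: s | p <- P, s <- tuples P k'] else [:: [::]].

Lemma size_tuples (T : Type) (P : seq T) k : size (tuples P k) = (size P ^ k)%N.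
Proof. by elim: k => [|k IH] //=; rewrite size_allpairs IH expnS. Qed.

Lemma tuples_choice (T : eqType) (U : Type) (P : seq T) (r : U -> T -> Prop)
    (x0 : T) k (u : nat -> U) :
  (forall i, (i < k)%N -> exists2 p, p \in P & r (u i) p) ->
  exists2 s, s \in tuples P k & forall i, (i < k)%N -> r (u i) (nth x0 s i).
Proof.
elim: k u => [|k IH] u near_u; first by exists [::] => //; rewrite inE.
have [s s_in near_s] := IH (fun i => u i.+1) (fun i => near_u i.+1).
have [p p_in near_p] := near_u 0%N isT.
exists (p :: s) => [|[|i] //]; first by apply/allpairsP; exists (p, s).
exact: near_s.
Qed.

Section Covering.
Variable R : realType.

(* Replacing each [q] by a point of [S] within [r] of it gives a [2r]-net in [S]. *)
Lemma covering_number_le_size m (S : set 'rV[R]_m) (Q : seq 'rV[R]_m) (r t : R) :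
  0 <= r -> 2 * r <= t ->
  (forall x, S x -> exists2 q, q \in Q & sqdist x q <= r ^+ 2) ->
  (covering_number S t <= (size Q)%:R%:E)%E.
Proof.
move=> r0 rt nearQ.
pose near q x := S x /\ sqdist x q <= r ^+ 2.
pose f q : option 'rV[R]_m :=
  if pselect (exists x, near q x) is left h then Some (projT1 (cid h)) else None.
have fP q c : f q = Some c -> near q c.
  by rewrite /f; case: pselect => // h [<-]; case: cid.
pose C := undup (pmap f Q).
have netC : is_net S t C.
  split; first exact: undup_uniq.
  split=> [c|x Sx].
    by rewrite mem_undup mem_pmap => /mapP[q _ /esym/fP[]].
  have [q qQ xq] := nearQ x Sx.
  case fq : (f q) => [c|]; last first.
    by move: fq; rewrite /f; case: pselect => // -[]; exists x.
  exists c; first by rewrite mem_undup mem_pmap; apply/mapP; exists q.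
  have [_ cq] := fP _ _ fq.
  apply: l2norm_le_sqdist; first by apply: le_trans rt; rewrite mulr_ge0.
  apply: le_trans (sqdist_le2 x q c) _; rewrite (sqdistC q c).
  have : (2 * r) ^+ 2 <= t ^+ 2.
    by rewrite ler_sqr // ?nnegrE ?mulr_ge0 ?(le_trans _ rt) ?mulr_ge0.
  lra.
apply: le_trans (ereal_inf_lbound _) _; first by exists C.
by rewrite lee_fin ler_nat (leq_trans (size_undup _)) // size_pmap count_size.
Qed.

Lemma covering_number_le1 m (S : set 'rV[R]_m) (t : R) :
  (forall x, S x -> inner x x = 1) -> 2 <= t -> (covering_number S t <= 1%E)%E.
Proof.
move=> S1 t2; apply: (le_trans (@covering_number_le_size _ _ [:: 0] 1 _ ler01 _ _)).
- by rewrite mulr1.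
- by move=> x Sx; exists 0; rewrite ?mem_head // sqdistx0 S1 // expr1n.
- by [].
Qed.

Lemma covering_number_unit_le m (S : set 'rV[R]_m) (t : R) :
  (forall x, S x -> inner x x = 1) -> 0 < t ->
  (covering_number S t <= ((1 + 4 / t) ^+ m)%:E)%E.
Proof.
move=> S1 t0; have t2 : 0 < t / 2 by rewrite divr_gt0.
have [P [_ sizeP netP]] := unit_sphere_net m t2.
apply: le_trans (covering_number_le_size (Q := P) (ltW t2) _ _) _.
- by rewrite mulrC divfK ?lt0r_neq0.
- by move=> x /S1/netP[p pP xp]; exists p => //; exact: ltW.
rewrite lee_fin (le_trans sizeP) //.
by have -> : 2 / (t / 2) = 4 / t by field; exact: lt0r_neq0.
Qed.

End Covering.

Section TensorSphere.
Variable R : realType.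

Lemma S1_inner n k (x : 'rV[R]_(n ^ k)) : S1 x -> inner x x = 1.
Proof.
by move=> [u [u1 ->]]; rewrite inner_kronprod big1 // => i _; exact/l2norm_eq1/u1.
Qed.

Lemma innerDD_orthonormal m (x y : 'rV[R]_m) :
  inner x x = 1 -> inner y y = 1 -> inner x y = 0 -> inner (x + y) (x + y) = 2.
Proof. by move=> x1 y1 xy; rewrite innerDD x1 y1 xy mulr0 addr0. Qed.

Lemma S12_inner n k (z : 'rV[R]_(n ^ k)) : S12 z -> inner z z = 1.
Proof.
case=> [/S1_inner // | [x [y [/S1_inner x1 [/S1_inner y1 [xy ->]]]]]].
rewrite innerZZ /l2norm innerDD_orthonormal // exprVn sqr_sqrtr //.
by rewrite mulVf.
Qed.

Lemma sqdist_normalizedD_le m (x y a b : 'rV[R]_m) (d : R) :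
  inner x x = 1 -> inner y y = 1 -> inner x y = 0 ->
  sqdist x a <= d -> sqdist y b <= d ->
  sqdist ((l2norm (x + y))^-1 *: (x + y)) ((Num.sqrt 2)^-1 *: (a + b)) <= 2 * d.
Proof.
move=> x1 y1 xy xa yb.
have -> : l2norm (x + y) = Num.sqrt 2 by rewrite /l2norm innerDD_orthonormal.
rewrite /sqdist.
have -> : (Num.sqrt 2)^-1 *: (x + y) - (Num.sqrt 2)^-1 *: (a + b) =
          (Num.sqrt 2)^-1 *: ((x - a) + (y - b)).
  by apply/rowP => j; rewrite !mxE; ring.
rewrite innerZZ exprVn sqr_sqrtr // mulrC ler_pdivrMr //.
by have := innerDD_le (x - a) (y - b); rewrite /sqdist in xa yb; lra.
Qed.

Lemma S1_kronprod_net n k (P : seq 'rV[R]_n) (e : R) :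
  (forall p, p \in P -> inner p p = 1) ->
  (forall x, inner x x = 1 -> exists2 p, p \in P & sqdist x p < e ^+ 2) ->
  forall x, S1 x -> exists2 a, a \in [seq kronprod k (nth 0 s) | s <- tuples P k] &
                               sqdist x a <= k%:R * e ^+ 2.
Proof.
move=> P1 netP _ [u [u1 ->]].
have [|s sP near_s] :=
  @tuples_choice _ _ P (fun x p => inner p p = 1 /\ sqdist x p < e ^+ 2) 0 k u.
  by move=> i /u1/l2norm_eq1/netP[p pP up]; exists p => //; split => //; exact: P1.
exists (kronprod k (nth 0 s)); first exact: map_f.
apply: le_trans (sqdist_kronprod_le _ _) _.
- by move=> i /u1/l2norm_eq1.
- by move=> i /near_s[].
apply: le_trans (_ : _ <= \sum_(i < k) e ^+ 2) _.
  by apply: ler_sum => i _; have [_ /ltW] := near_s i (ltn_ord i).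
by rewrite sumr_const card_ord mulr_natl.
Qed.

Lemma covering_number_S12_le_gt1 n k (t : R) : (1 < k)%N -> 0 < t ->
  (covering_number (@S12 R n k) t <= (((1 + 4 * k%:R / t) ^+ (n * k) + 1) ^+ 2)%:E)%E.
Proof.
move=> k2 t0; set K : R := k%:R.
have K2 : 2 <= K by rewrite (ler_nat R 2 k).
set e := t / (2 * K); have e0 : 0 < e by rewrite divr_gt0 // mulr_gt0 //; lra.
have [P [P1 sizeP netP]] := unit_sphere_net n e0.
set A := [seq kronprod k (nth 0 s) | s <- tuples P k].
have netA x : S1 x -> exists2 a, a \in A & sqdist x a <= (t / 2) ^+ 2 / 2.
  move=> /(S1_kronprod_net P1 netP)[a aA xa]; exists a => //; apply: le_trans xa _.
  have -> : K * e ^+ 2 = (t / 2) ^+ 2 / 2 * (2 / K) by rewrite /e; field; lra.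
  by rewrite ler_piMr ?divr_ge0 ?sqr_ge0 // ler_pdivrMr ?mul1r //; lra.
pose Q := A ++ [seq (Num.sqrt 2)^-1 *: (a + b) | a <- A, b <- A].
apply: le_trans (covering_number_le_size (Q := Q) (r := t / 2) _ _ _) _.
- by rewrite divr_ge0 ?ltW.
- by rewrite mulrC divfK ?lt0r_neq0.
- move=> z [S1z | [x [y [S1x [S1y [xy ->]]]]]].
    have [a aA za] := netA z S1z; exists a; first by rewrite mem_cat aA.
    by apply: le_trans za _; have := sqr_ge0 (t / 2); lra.
  have [a aA xa] := netA x S1x; have [b bA yb] := netA y S1y.
  exists ((Num.sqrt 2)^-1 *: (a + b)).
    by rewrite mem_cat; apply/orP; right; exact: allpairs_f.
  apply: le_trans (sqdist_normalizedD_le (S1_inner S1x) (S1_inner S1y) xy xa yb) _.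
  lra.
rewrite lee_fin size_cat size_allpairs size_map size_tuples natrD natrM natrX.
have e2 : 2 / e = 4 * K / t by rewrite /e; field; apply/andP; split; lra.
have M_le : (size P)%:R ^+ k <= (1 + 4 * K / t) ^+ (n * k).
  by rewrite exprM lerXn2r ?nnegrE -?e2 // exprn_ge0 // addr_ge0 // divr_ge0 // ltW.
have M0 : 0 <= (size P)%:R ^+ k :> R by rewrite exprn_ge0.
move: M_le M0; set M := (size P)%:R ^+ k; set B := (1 + 4 * K / t) ^+ (n * k).
by move=> *; nra.
Qed.

Lemma covering_number_S12_le n k (t : R) : (0 < k)%N -> 0 < t ->
  (covering_number (@S12 R n k) t <= (((1 + 4 * k%:R / t) ^+ (k * n) + 1) ^+ 2)%:E)%E.
Proof.
move=> k0 t0; have [k1|] := ltnP 1 k; first by rewrite mulnC covering_number_S12_le_gt1.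
rewrite leq_eqVlt ltnS leqn0 eqn0Ngt k0 orbF => /eqP ->.
apply: le_trans (covering_number_unit_le (@S12_inner n 1) t0) _.
rewrite lee_fin expn1 mul1n mulr1n mulr1.
have : 0 <= (1 + 4 / t) ^+ n by rewrite exprn_ge0 // addr_ge0 // divr_ge0 // ltW.
set a := (1 + 4 / t) ^+ n; nra.
Qed.

End TensorSphere.

Theorem lemma1 (R : realType) (n kappa : nat) (t : R) :
  (1 <= n)%N -> (1 <= kappa)%N -> 0 < t ->
  (covering_number (@S12 R n kappa) t <=
   ((((6 * kappa%:R) / t) ^+ (kappa * n) + 1) ^+ 2)%:E)%E.
Proof.
move=> _ k1 t0; set K : R := kappa%:R; have K1 : 1 <= K by rewrite ler1n.
have b0 : 0 <= 6 * K / t by apply: divr_ge0; [apply: mulr_ge0|]; lra.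
have [t2|t2] := leP 2 t.
  apply: le_trans (covering_number_le1 (@S12_inner _ _ _) t2) _.
  by rewrite lee_fin exprn_ege1 // lerDr exprn_ge0.
apply: le_trans (covering_number_S12_le n k1 t0) _; rewrite lee_fin.
have a0 : 0 <= 1 + 4 * K / t.
  by rewrite addr_ge0 //; apply: divr_ge0; [apply: mulr_ge0|]; lra.
have ab : 1 + 4 * K / t <= 6 * K / t.
  have -> : 6 * K / t = 4 * K / t + 2 * K / t by field; exact: lt0r_neq0.
  by rewrite addrC lerD2l ler_pdivlMr // mul1r; lra.
by rewrite lerXn2r ?nnegrE ?addr_ge0 ?exprn_ge0 // lerD2r lerXn2r ?nnegrE.
Qed.
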